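(* Consider the discrete-time fractional-order system $\Delta^{\alpha}x[k+1]=Ax[k]+Bu[k]$, $y[k]=Cx[k]$, with state $x[k]\in\mathbb{R}^n$, unknown input $u[k]\in\mathbb{R}^p$ ($p<n$), and matrices $A\in\mathbb{R}^{n\times n}$, $B\in\mathbb{R}^{n\times p}$, $C$ with $n$ columns, where $\Delta^{\alpha_i}x_i[k]=\sum_{j=0}^{k}\psi(\alpha_i,j)x_i[k-j]$. Let $K\ge 1$ and define $\Theta$ and $\Xi$ as in the context. Then the system is perfectly observable after $K$ measurements if and only if $\operatorname{rank}([\Theta\ \ \Xi])=n+(K-1)p$.
   Context: $\psi(\alpha_i,j)=\frac{\Gamma(j-\alpha_i)}{\Gamma(-\alpha_i)\Gamma(j+1)}$, $D(\alpha,j)=\operatorname{diag}(\psi(\alpha_1,j),\dots,\psi(\alpha_n,j))$, $A_0=A-D(\alpha,1)$, $A_j=-D(\alpha,j+1)$ for $j\ge1$, $G_0=I_n$, $G_k=\sum_{j=0}^{k-1}A_jG_{k-1-j}$ for $k\ge1$; the state satisfies $x[k]=G_kx[0]+\sum_{j=0}^{k-1}G_{k-1-j}Bu[j]$. Define $\Theta=[(CG_0)^T,(CG_1)^T,\dots,(CG_{K-1})^T]^T$ and $\Xi$ the $K\times K$ block lower-triangular matrix whose $(r,s)$ block ($r,s=1,\dots,K$) is $CG_{r-s-1}B$ if $r>s$ and $0$ otherwise (so the first block row and last block column are zero), so that $Y=\Theta x[0]+\Xi U$ with $Y=[y[0]^T,\dots,y[K-1]^T]^T$, $U=[u[0]^T,\dots,u[K-1]^T]^T$.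 The system is perfectly observable (after $K$ measurements) if, given $(\alpha,A,B,C)$ and the observations $y[0],\dots,y[K-1]$, it is possible to (uniquely) recover the initial state $x[0]$ and the unknown inputs $u[0],\dots,u[K-2]$. *)

From mathcomp Require Import all_boot all_order all_algebra.
From mathcomp Require Import reals.
Set Implicit Arguments. Unset Strict Implicit. Unset Printing Implicit Defensive.
Import Order.TTheory GRing.Theory Num.Theory.
Local Open Scope ring_scope.

Section FracSys.
Variables (R : realType) (n p q : nat).

(* psi(a,j) = Gamma(j-a)/(Gamma(-a) Gamma(j+1)) = prod_{i<j} (i - a)/(i + 1)
   (the Gamma-ratio written out via Gamma(z+1) = z Gamma(z)). *)
Definition psi (a : R) (j : nat) : R :=
  \prod_(i < j) ((i%:R - a) / (i.+1)%:R).

Definition Dmx (alpha : 'I_n -> R) (j : nat) : 'M[R]_n :=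
  diag_mx (\row_i psi (alpha i) j).

Definition Acoef (alpha : 'I_n -> R) (A : 'M[R]_n) (j : nat) : 'M[R]_n :=
  if j == 0%N then A - Dmx alpha 1 else - Dmx alpha j.+1.

Fixpoint Gseq (alpha : 'I_n -> R) (A : 'M[R]_n) (k : nat) : seq 'M[R]_n :=
  match k with
  | 0 => [:: 1%:M]
  | k'.+1 => let s := Gseq alpha A k' in
      rcons s (\sum_(j < k'.+1) Acoef alpha A j *m nth 0 s (k' - j)%N)
  end.

Definition Gmx (alpha : 'I_n -> R) (A : 'M[R]_n) (k : nat) : 'M[R]_n :=
  nth 0 (Gseq alpha A k) k.

Definition Theta (alpha : 'I_n -> R) (A : 'M[R]_n) (C : 'M[R]_(q, n)) (K : nat)
  : 'M[R]_(\sum_(r < K) q, n) :=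
  \mxcol_(r < K) (C *m Gmx alpha A r).

Definition Xi (alpha : 'I_n -> R) (A : 'M[R]_n) (B : 'M[R]_(n, p))
  (C : 'M[R]_(q, n)) (K : nat) : 'M[R]_(\sum_(r < K) q, \sum_(s < K) p) :=
  \mxblock_(r < K, s < K)
    (if (s < r)%N then C *m Gmx alpha A (r - s - 1)%N *m B else 0 : 'M[R]_(q, p)).

Definition frac_diff (alpha : 'I_n -> R) (x : nat -> 'cV[R]_n) (k : nat) : 'cV[R]_n :=
  \col_i (\sum_(j < k.+1) psi (alpha i) j * x (k - j)%N i 0).

Definition is_trajectory (alpha : 'I_n -> R) (A : 'M[R]_n) (B : 'M[R]_(n, p))
  (x : nat -> 'cV[R]_n) (u : nat -> 'cV[R]_p) : Prop :=
  forall k, frac_diff alpha x k.+1 = A *m x k + B *m u k.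

Definition perfectly_observable (alpha : 'I_n -> R) (A : 'M[R]_n)
  (B : 'M[R]_(n, p)) (C : 'M[R]_(q, n)) (K : nat) : Prop :=
  forall (x x' : nat -> 'cV[R]_n) (u u' : nat -> 'cV[R]_p),
    is_trajectory alpha A B x u -> is_trajectory alpha A B x' u' ->
    (forall k, (k < K)%N -> C *m x k = C *m x' k) ->
    x 0%N = x' 0%N /\ (forall j, (j < K.-1)%N -> u j = u' j).

End FracSys.

From mathcomp Require Import all_boot all_order all_algebra.
From mathcomp Require Import reals.
From mathcomp Require Import zify.
Set Implicit Arguments. Unset Strict Implicit. Unset Printing Implicit Defensive.
Import Order.TTheory GRing.Theory Num.Theory.
Local Open Scope ring_scope.

(* The solution with initial state x0 and inputs u is
   x[k] = G_k x0 + sum_(s<k) G_(k-1-s) B u[s], so the stacked outputs are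
   [Theta Xi] [x0; u[0]; ...; u[K-1]].  By linearity, perfect observability says
   exactly that every kernel vector of [Theta Xi] vanishes outside its last input
   block.  That block of columns of Xi is zero (u[K-1] never reaches y[0..K-1]), so
   the kernel always contains this p-dimensional space, and observability means the
   kernel is no larger: rank [Theta Xi] = n + K p - p. *)

Section KernelRank.
Variables (F : fieldType) (m N r : nat) (M : 'M[F]_(m, N)) (S : 'M[F]_(r, N)).

Lemma sub_kermx_trP :
  reflect (forall v : 'cV_N, M *m v = 0 -> (v^T <= S)%MS) (kermx M^T <= S)%MS.
Proof.
apply: (iffP idP) => [kerS v Mv0 | kerS].
  by apply: submx_trans _ kerS; rewrite sub_kermx -(trmx_mul M v) Mv0 trmx0.
apply/row_subP => i; rewrite -[row i _]trmxK; apply: kerS; apply: trmx_inj.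
by rewrite trmx_mul trmxK trmx0 -row_mul mulmx_ker row0.
Qed.

Lemma kermx_tr_sub_rank :
  M *m S^T = 0 -> (kermx M^T <= S)%MS = (\rank M + \rank S == N)%N.
Proof.
move=> MS0; have SsubK : (S <= kermx M^T)%MS.
  by rewrite sub_kermx -[S]trmxK -trmx_mul MS0 trmx0.
rewrite -(mxrank_leqif_sup SsubK).2 mxrank_ker mxrank_tr.
have := rank_leq_col M; lia.
Qed.
End KernelRank.

Lemma exchange_big_triangle (V : nmodType) k (F : nat -> nat -> V) :
  \sum_(i < k) \sum_(j < k - i) F i j = \sum_(j < k) \sum_(i < k - j) F i j.
Proof.
have widen (G : nat -> nat -> V) : \sum_(i < k) \sum_(j < k - i) G i j =
    \sum_(i < k) \sum_(j < k) (if (i + j < k)%N then G i j else 0 : V).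
  apply: eq_bigr => i _; rewrite (big_ord_widen k (G i) (leq_subr i k)) big_mkcond.
  by apply: eq_bigr => j _; rewrite ltn_subRL.
rewrite (widen F) exchange_big (widen (fun j i => F i j)).
by apply: eq_bigr => j _; apply: eq_bigr => i _; rewrite addnC.
Qed.

Section Trajectories.
Variables (R : realType) (n p : nat) (alpha : 'I_n -> R).
Variables (A : 'M[R]_n) (B : 'M[R]_(n, p)).

Lemma psi0 (a : R) : psi a 0 = 1.
Proof. by rewrite /psi big_ord0. Qed.

Lemma size_Gseq k : size (Gseq alpha A k) = k.+1.
Proof. by elim: k => //= k IH; rewrite size_rcons IH. Qed.

Lemma nth_Gseq k i : (i <= k)%N -> nth 0 (Gseq alpha A k) i = Gmx alpha A i.
Proof.
elim: k => [|k IH]; first by rewrite leqn0 => /eqP ->.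
rewrite leq_eqVlt => /orP[/eqP -> // | ltik].
by rewrite /= nth_rcons size_Gseq ltik IH.
Qed.

Lemma Gmx0 : Gmx alpha A 0 = 1%:M.
Proof. by []. Qed.

Lemma GmxS k :
  Gmx alpha A k.+1 = \sum_(j < k.+1) Acoef alpha A j *m Gmx alpha A (k - j).
Proof.
rewrite /Gmx /= nth_rcons size_Gseq ltnn eqxx.
by apply: eq_bigr => j _; rewrite nth_Gseq // leq_subr.
Qed.

Lemma frac_diffSE (x : nat -> 'cV[R]_n) k :
  frac_diff alpha x k.+1 = x k.+1 + \sum_(j < k.+1) Dmx alpha j.+1 *m x (k - j)%N.
Proof.
apply/matrixP => i l; rewrite !ord1 !mxE big_ord_recl psi0 mul1r subn0 summxE.
by congr (_ + _); apply: eq_bigr => j _; rewrite /Dmx mul_diag_mx !mxE subSS.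
Qed.

Lemma sum_Acoef_mul (x : nat -> 'cV[R]_n) k :
  \sum_(j < k.+1) Acoef alpha A j *m x (k - j)%N =
  A *m x k - \sum_(j < k.+1) Dmx alpha j.+1 *m x (k - j)%N.
Proof.
rewrite !big_ord_recl /= subn0 mulmxBl opprD addrA -sumrN.
by congr (_ + _); apply: eq_bigr => j _; rewrite mulNmx.
Qed.

Lemma trajectoryP (x : nat -> 'cV[R]_n) (u : nat -> 'cV[R]_p) :
  is_trajectory alpha A B x u <->
  forall k, x k.+1 = \sum_(j < k.+1) Acoef alpha A j *m x (k - j)%N + B *m u k.
Proof.
split => traj k; move: (traj k); rewrite frac_diffSE sum_Acoef_mul.
  by move/(canRL (addrK _)) => ->; rewrite addrAC.
by move=> ->; rewrite addrAC subrK.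
Qed.

Definition state (x0 : 'cV[R]_n) (u : nat -> 'cV[R]_p) (k : nat) : 'cV[R]_n :=
  Gmx alpha A k *m x0 + \sum_(s < k) Gmx alpha A (k - s.+1) *m B *m u s.

Lemma state_at0 x0 u : state x0 u 0 = x0.
Proof. by rewrite /state big_ord0 addr0 Gmx0 mul1mx. Qed.

Lemma state_zero k : state 0 (fun=> 0) k = 0.
Proof. by rewrite /state mulmx0 add0r big1 // => s _; rewrite mulmx0. Qed.

Lemma stateB x0 x1 u u1 k :
  state x0 u k - state x1 u1 k = state (x0 - x1) (fun s => u s - u1 s) k.
Proof.
rewrite /state mulmxBr opprD addrACA -sumrB.
by congr (_ + _); apply: eq_bigr => s _; rewrite mulmxBr.
Qed.

Lemma stateS x0 u k : state x0 u k.+1 =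
  \sum_(j < k.+1) Acoef alpha A j *m state x0 u (k - j) + B *m u k.
Proof.
rewrite /state GmxS mulmx_suml.
under [X in _ = X + _]eq_bigr do rewrite mulmxDr.
rewrite big_split -addrA /=; congr (_ + _).
  by apply: eq_bigr => j _; rewrite mulmxA.
rewrite big_ord_recr /= subnn Gmx0 mul1mx; congr (_ + _).
have GmxE i : (0 < i)%N ->
    Gmx alpha A i = \sum_(j < i) Acoef alpha A j *m Gmx alpha A (i.-1 - j).
  by case: i => // i _; rewrite GmxS.
under eq_bigr => s _ do rewrite subSS GmxE ?subn_gt0 // mulmx_suml mulmx_suml.
rewrite big_ord_recr /= subnn big_ord0 mulmx0 addr0.
rewrite (exchange_big_triangle k
  (fun s j => Acoef alpha A j *m Gmx alpha A ((k - s).-1 - j) *m B *m u s)).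
apply: eq_bigr => j _; rewrite mulmx_sumr; apply: eq_bigr => s _.
by rewrite !mulmxA; congr (_ *m Gmx _ _ _ *m _ *m _); lia.
Qed.

Lemma state_trajectory x0 u : is_trajectory alpha A B (state x0 u) u.
Proof. by apply/trajectoryP => k; rewrite stateS. Qed.

Lemma trajectory_state x u :
  is_trajectory alpha A B x u -> forall k, x k = state (x 0%N) u k.
Proof.
move/trajectoryP => traj k; elim/ltn_ind: k => -[_ | k IH]; first by rewrite state_at0.
rewrite traj stateS; congr (_ + _); apply: eq_bigr => j _.
by rewrite IH // ltnS leq_subr.
Qed.

End Trajectories.

Section Observability.
Variables (R : realType) (n p q : nat) (alpha : 'I_n -> R).
Variables (A : 'M[R]_n) (B : 'M[R]_(n, p)) (C : 'M[R]_(q, n)).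

Lemma mul_Theta_Xi K x0 (u : nat -> 'cV[R]_p) :
  row_mx (Theta alpha A C K) (Xi alpha A B C K) *m col_mx x0 (\mxcol_(s < K) u s)
  = \mxcol_(r < K) (C *m state alpha A B x0 u r).
Proof.
rewrite mul_row_col mxcol_mul mul_mxblock_mxrow -mxcolD; apply: eq_mxcol => r.
rewrite mulmxDr mulmxA mulmx_sumr; congr (_ + _).
rewrite (big_ord_widen K (fun s => C *m (Gmx alpha A (r - s.+1) *m B *m u s)))
  ?(ltnW (ltn_ord r)) // [RHS]big_mkcond; apply: eq_bigr => s _.
by case: ifP => _; rewrite ?mul0mx // !mulmxA subn1 subnS.
Qed.

Lemma perfectly_observableP K :
  perfectly_observable alpha A B C K <->
  forall x0 u, (forall k, (k < K)%N -> C *m state alpha A B x0 u k = 0) ->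
    x0 = 0 /\ forall j, (j < K.-1)%N -> u j = 0.
Proof.
split => [obs x0 u y0 | kerP x x' u u' traj traj' yy].
  have := obs _ _ _ _ (state_trajectory alpha A B x0 u)
    (state_trajectory alpha A B 0 (fun=> 0)).
  by rewrite !state_at0; apply => k /y0 ->; rewrite state_zero mulmx0.
have [] := kerP (x 0%N - x' 0%N) (fun s => u s - u' s).
  move=> k ltkK; rewrite -stateB -(trajectory_state traj) -(trajectory_state traj').
  by rewrite mulmxBr yy ?subrr.
by move=> /subr0_eq -> du0; split => // j /du0 /subr0_eq.
Qed.

End Observability.

Section LastInput.
Variables (F : fieldType) (n p K : nat).

Definition last_input_mx : 'M[F]_(n + \sum_(s < K.+1) p, p) :=
  col_mx 0 (\mxcol_(s < K.+1) (if s == ord_max then 1%:M else 0 : 'M_p)).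

Lemma mul_last_input_mx m (Z : 'M[F]_(p, m)) :
  last_input_mx *m Z =
  col_mx 0 (\mxcol_(s < K.+1) (if s == ord_max then Z else 0 : 'M_(p, m))).
Proof.
rewrite mul_col_mx mul0mx mxcol_mul; congr col_mx; apply: eq_mxcol => s.
by case: eqP; rewrite ?mul1mx ?mul0mx.
Qed.

Lemma rank_last_input_mx : \rank last_input_mx^T = p.
Proof.
apply/eqP/row_freeP; exists last_input_mx.
rewrite tr_col_mx mul_row_col trmx0 mul0mx add0r tr_mxcol mul_mxrow_mxcol.
rewrite (bigD1 ord_max) //= eqxx trmx1 mulmx1 big1 ?addr0 // => s /negbTE ->.
by rewrite trmx0 mul0mx.
Qed.

Lemma sub_last_input_mxP x0 (u : nat -> 'cV[F]_p) :
  ((col_mx x0 (\mxcol_(s < K.+1) u s))^T <= last_input_mx^T)%MS <->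
  x0 = 0 /\ forall j, (j < K)%N -> u j = 0.
Proof.
split => [/submxP[D] | [-> u0]].
  move/(congr1 trmx); rewrite trmxK trmx_mul trmxK mul_last_input_mx.
  move/eq_col_mx => [-> uE]; split => // j ltjK.
  have := congr1 (fun X => submxcol X (inord j)) uE.
  rewrite !mxcolK inordK ?ltnS 1?ltnW //.
  by rewrite -val_eqE /= inordK ?ltnS 1?ltnW // ltn_eqF.
rewrite (_ : col_mx 0 _ = last_input_mx *m u K) ?trmx_mul ?submxMl //.
rewrite mul_last_input_mx; congr col_mx; apply: eq_mxcol => s.
case: eqP => [-> // | /eqP ne]; apply: u0.
by have := ltn_ord s; rewrite -val_eqE /= in ne; lia.
Qed.

End LastInput.

Section ObservabilityRank.
Variables (R : realType) (n p q : nat) (alpha : 'I_n -> R).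
Variables (A : 'M[R]_n) (B : 'M[R]_(n, p)) (C : 'M[R]_(q, n)) (K : nat).

Let M := row_mx (Theta alpha A C K.+1) (Xi alpha A B C K.+1).

Lemma Theta_Xi_last_input : M *m last_input_mx R n p K = 0.
Proof.
rewrite mul_row_col mulmx0 add0r mul_mxblock_mxrow -mxcol0.
apply: eq_mxcol => r; apply: big1 => s _.
case: eqP => [-> | _]; last by rewrite mulmx0.
by rewrite ltnNge -ltnS ltn_ord mul0mx.
Qed.

Lemma perfectly_observable_kermx :
  perfectly_observable alpha A B C K.+1 <->
  (kermx M^T <= (last_input_mx R n p K)^T)%MS.
Proof.
rewrite perfectly_observableP /=; split => [kerP | /sub_kermx_trP kerS x0 u y0].
  apply/sub_kermx_trP => v Mv0.
  pose x0 := usubmx v; pose u k := submxcol (dsubmx v) (inord k) : 'cV_p.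
  have vE : v = col_mx x0 (\mxcol_(s < K.+1) u s).
    by rewrite (eq_mxcol (fun s => congr1 _ (inord_val s))) submxcolK vsubmxK.
  rewrite vE; apply/sub_last_input_mxP/kerP => k ltkK.
  have := congr1 (fun X => submxcol X (Ordinal ltkK)) Mv0.
  by rewrite vE mul_Theta_Xi mxcolK submxcol0.
apply/sub_last_input_mxP/kerS; rewrite mul_Theta_Xi -mxcol0.
by apply: eq_mxcol => r; apply: y0.
Qed.

End ObservabilityRank.

Theorem proposition2 (R : realType) (n p q : nat) (alpha : 'I_n -> R)
  (A : 'M[R]_n) (B : 'M[R]_(n, p)) (C : 'M[R]_(q, n)) (K : nat) :
  (p < n)%N -> (1 <= K)%N ->
  perfectly_observable alpha A B C K <->
  \rank (row_mx (Theta alpha A C K) (Xi alpha A B C K)) = (n + (K - 1) * p)%N.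
Proof.
move=> _; case: K => // K _.
rewrite perfectly_observable_kermx kermx_tr_sub_rank ?trmxK ?Theta_Xi_last_input //.
rewrite rank_last_input_mx; move: (\rank _) => r.
rewrite sum_nat_const card_ord subn1 /=.
by split => [/eqP | ->]; [lia | apply/eqP; lia].
Qed.
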